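(* Consider the coupled opinion–network system described in the context with memory weight dynamics, and assume there is a constant $c>0$ with $\phi(r)>c$ for all $r\in[-2,2]$. Then the opinion diameter $D(t)=\max_{i,j}|x_j(t)-x_i(t)|$ satisfies, for all $t\ge0$, $D(t)\le \exp\big(-c^2(t+e^{-t}-1)\big)\,D(0)$.
   Context: There are $N$ individuals with opinions $x_i(t)\in[-1,1]$ and edge weights $w_{ij}(t)\in[0,1]$. The degree is $k_i=\sum_{j=1}^N w_{ij}$. With interaction function $\phi:[-2,2]\to[0,1]$, the system with memory weight dynamics is $\frac{dx_i}{dt}=\frac{1}{k_i}\sum_{j\neq i} w_{ij}\,\phi(x_j-x_i)(x_j-x_i)$, $\frac{dw_{ij}}{dt}=\phi(x_j-x_i)-w_{ij}$ for $i\neq j$, and $w_{ii}\equiv 1$. Standing assumptions: $\phi$ is Lipschitz continuous, even, and $\phi(0)>0$; $x_1(0)\le\dots\le x_N(0)$; $w_{ii}=1$; the initial network $w(0)$ is strongly connected. *)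

(* real numbers R, Coquelicot derivatives. Indices are nat i < N
   (individual i+1 of the paper is index i here). *)
From Stdlib Require Import Reals Lra.
From Coquelicot Require Import Coquelicot.
Open Scope R_scope.

Fixpoint sumN (n : nat) (f : nat -> R) : R :=
  match n with O => 0 | S m => sumN m f + f m end.

(* max_{k<n} f k, with value 0 for n = 0 (only used for nonnegative f, n >= 1) *)
Fixpoint maxN (n : nat) (f : nat -> R) : R :=
  match n with O => 0 | S m => Rmax (maxN m f) (f m) end.

Definition diam (N : nat) (x : nat -> R -> R) (t : R) : R :=
  maxN N (fun i => maxN N (fun j => Rabs (x j t - x i t))).

Definition degree (N : nat) (w : nat -> nat -> R -> R) (i : nat) (t : R) : R :=
  sumN N (fun j => w i j t).

Definition opinion_rhs (N : nat) (phi : R -> R) (x : nat -> R -> R)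
    (w : nat -> nat -> R -> R) (i : nat) (t : R) : R :=
  / degree N w i t *
  sumN N (fun j => if Nat.eq_dec j i then 0
                   else w i j t * phi (x j t - x i t) * (x j t - x i t)).

Inductive reach (N : nat) (w0 : nat -> nat -> R) : nat -> nat -> Prop :=
  | reach_refl : forall i, reach N w0 i i
  | reach_step : forall i j k, (j < N)%nat -> 0 < w0 i j -> reach N w0 j k ->
                 reach N w0 i k.

Definition strongly_connected (N : nat) (w0 : nat -> nat -> R) : Prop :=
  forall i j, (i < N)%nat -> (j < N)%nat -> reach N w0 i j.

From Pilot Require Import Defs.
From Stdlib Require Import Reals Lra Lia Classical.
From Coquelicot Require Import Coquelicot.
Open Scope R_scope.

(* Each weight obeys w' = phi - w with phi >= c, so w_ij(t) >= c (1 - e^-t) and every coupling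
   w_ij phi(x_j - x_i) is at least a(t) = c^2 (1 - e^-t).  If x_j is the largest and x_i the
   smallest opinion, comparing both right-hand sides with the mean opinion (the degrees lie in
   [1, N]) gives (x_j - x_i)' <= - a(t) (x_j - x_i), whose solution is
   exp(-c^2 (t + e^-t - 1)) D(0).  Since the extremal pair may change over time, one argues with
   barriers instead: by continuous induction every difference x_j - x_i stays below
   (D(0) + e) exp(-c^2 (t + e^-t - 1)) + e t, because at a first touching time the touching pair
   is extremal and the inequality above makes the difference fall faster than the barrier.
   Finally let e -> 0. *)

Lemma continuous_induction (Q : R -> Prop) :
  Q 0 ->
  (forall t, 0 <= t -> Q t -> at_right t Q) ->
  (forall t, 0 < t -> (forall s, 0 <= s < t -> Q s) -> Q t) ->
  forall t, 0 <= t -> Q t.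
Proof.
  intros Q0 Hright Hleft T HT.
  destruct (classic (Q T)) as [|nQT]; [assumption | exfalso].
  set (E := fun t => 0 <= t <= T /\ forall s, 0 <= s <= t -> Q s).
  assert (E0 : E 0).
  { split; [lra |]. intros s Hs. replace s with 0 by lra. exact Q0. }
  destruct (completeness E) as [m [Hub Hlub]].
  { exists T. intros t [Ht _]. lra. }
  { exists 0. exact E0. }
  assert (Hm : 0 <= m <= T).
  { split; [apply Hub, E0 | apply Hlub; intros t [Ht _]; lra]. }
  assert (Hbelow : forall s, 0 <= s < m -> Q s).
  { intros s Hs. destruct (classic (Q s)) as [|nQs]; [assumption | exfalso].
    enough (m <= s) by lra.
    apply Hlub. intros t [_ Ht]. destruct (Rle_dec t s) as [|Hts]; [assumption |].
    exfalso. apply nQs, Ht. lra. }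
  assert (Qm : Q m).
  { destruct (Req_dec m 0) as [-> | Hm0]; [exact Q0 | apply Hleft; [lra | exact Hbelow]]. }
  assert (HmT : m < T) by (destruct (Req_dec m T) as [<- |]; [contradiction | lra]).
  destruct (Hright m (proj1 Hm) Qm) as [eps Heps].
  assert (HE : E (Rmin (m + eps / 2) T)).
  { pose proof (Rmin_l (m + eps / 2) T). pose proof (Rmin_r (m + eps / 2) T).
    pose proof (cond_pos eps).
    split; [split; [apply Rmin_glb | ]; lra |].
    intros s Hs. destruct (Rtotal_order s m) as [Hsm | [-> | Hsm]].
    - apply Hbelow. lra.
    - exact Qm.
    - apply Heps; [| exact Hsm]. change (Rabs (s - m) < eps). rewrite Rabs_right; lra. }
  assert (m < Rmin (m + eps / 2) T) by (apply Rmin_glb_lt; pose proof (cond_pos eps); lra).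
  pose proof (Hub _ HE). lra.
Qed.

Lemma filter_forall_nat_lt (F : (R -> Prop) -> Prop) {FF : Filter F}
    (P : nat -> R -> Prop) (n : nat) :
  (forall k, (k < n)%nat -> F (P k)) -> F (fun s => forall k, (k < n)%nat -> P k s).
Proof.
  induction n as [| n IH]; intros HP.
  - apply filter_forall. intros s k Hk. lia.
  - assert (Hn : F (P n)) by (apply HP; lia).
    assert (Hlt : F (fun s => forall k, (k < n)%nat -> P k s)) by (apply IH; intros; apply HP; lia).
    eapply filter_imp; [| exact (filter_and _ _ Hlt Hn)].
    intros s [Hs Hsn] k Hk. destruct (Nat.eq_dec k n) as [-> |]; [exact Hsn | apply Hs; lia].
Qed.

Lemma filterlim_Rminus (F : (R -> Prop) -> Prop) {FF : Filter F} (f g : R -> R) (a b : R) :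
  filterlim f F (locally a) -> filterlim g F (locally b) ->
  filterlim (fun s => f s - g s) F (locally (a - b)).
Proof.
  intros Hf Hg. apply (filterlim_comp_2 f g Rminus Hf Hg).
  apply (filterlim_comp_2 (F := filter_prod (locally a) (locally b))
           (G := locally a) (H := locally (opp b))
           (fst : R * R -> R) (fun z : R * R => opp (snd z)) (@plus R_AbelianGroup)).
  - apply filterlim_fst.
  - eapply filterlim_comp; [apply filterlim_snd | apply (filterlim_opp (V := R_NormedModule))].
  - apply (filterlim_plus (V := R_NormedModule) a (opp b)).
Qed.

Lemma filterlim_lt_eventually (F : (R -> Prop) -> Prop) (f : R -> R) (a b : R) :
  filterlim f F (locally a) -> a < b -> F (fun s => f s < b).
Proof.
  intros Hf Hab. apply (Hf (fun y => y < b)).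
  exists (mkposreal (b - a) ltac:(lra)). intros y Hy.
  change (Rabs (y - a) < b - a) in Hy. apply Rabs_def2 in Hy. lra.
Qed.

Lemma at_left_of_forall_before (t : R) (P : R -> Prop) :
  0 < t -> (forall s, 0 <= s < t -> P s) -> at_left t P.
Proof.
  intros Ht HP. exists (mkposreal t Ht). intros s Hs Hst.
  change (Rabs (s - t) < t) in Hs. apply Rabs_def2 in Hs. apply HP. lra.
Qed.

Lemma continuous_le_at_left (h : R -> R) (t a : R) :
  continuous h t -> at_left t (fun s => h s <= a) -> h t <= a.
Proof.
  intros Hh Ha.
  apply (filterlim_le (F := at_left t) h (fun _ => a) (h t) a Ha).
  - apply (filterlim_filter_le_1 (F := locally t)); [apply filter_le_within | exact Hh].
  - apply filterlim_const.
Qed.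

Lemma is_derive_ge0_at_left_max (h : R -> R) (t l : R) :
  is_derive h t l -> at_left t (fun s => h s <= h t) -> 0 <= l.
Proof.
  intros Hd [eps Heps]. apply is_derive_Reals in Hd.
  destruct (Rle_dec 0 l) as [| Hl]; [assumption | exfalso].
  destruct (Hd (- l / 2) ltac:(lra)) as [del Hdel].
  set (k := - Rmin del eps / 2).
  assert (Hmin : 0 < Rmin del eps) by (apply Rmin_glb_lt; apply cond_pos).
  pose proof (Rmin_l del eps). pose proof (Rmin_r del eps).
  assert (Hk : k < 0) by (unfold k; lra).
  assert (Hq : Rabs ((h (t + k) - h t) / k - l) < - l / 2).
  { apply Hdel; [lra |]. rewrite Rabs_left; unfold k; lra. }
  assert (Hle : h (t + k) <= h t).
  { apply Heps; [| lra]. change (Rabs (t + k - t) < eps).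
    rewrite Rabs_left; unfold k; lra. }
  apply Rabs_def2 in Hq.
  set (q := (h (t + k) - h t) / k) in Hq.
  assert (h (t + k) - h t = q * k) by (unfold q; field; lra).
  nra.
Qed.

Lemma relaxation_lower_bound (v p : R -> R) (c : R) :
  (forall s, 0 < s -> 0 <= v s) ->
  (forall s, 0 < s -> is_derive v s (p s - v s)) ->
  (forall s, 0 < s -> c <= p s) ->
  forall t, 0 < t -> c * (1 - exp (- t)) <= v t.
Proof.
  intros Hv Hd Hp t Ht.
  set (u := fun s => (v s - c) * exp s).
  assert (Hu : forall s, 0 < s -> is_derive u s ((p s - c) * exp s)).
  { intros s Hs.
    assert (H := is_derive_mult (fun s => v s - c) exp s _ _
                   (is_derive_minus v (fun _ => c) s _ _ (Hd s Hs) (is_derive_const c s))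
                   (is_derive_exp s) Rmult_comm).
    replace ((p s - c) * exp s) with ((p s - v s - 0) * exp s + (v s - c) * exp s) by ring.
    exact H. }
  assert (Hmono : forall s, 0 < s < t -> u s <= u t).
  { intros s Hs.
    destruct (MVT_cor2 u (fun s => (p s - c) * exp s) s t ltac:(lra)) as [r [Hr Hrst]].
    { intros r Hr. apply is_derive_Reals, Hu. lra. }
    assert (0 <= (p r - c) * exp r).
    { apply Rmult_le_pos; [pose proof (Hp r ltac:(lra)); lra | apply Rlt_le, exp_pos]. }
    nra. }
  assert (Hut : - c * exp 0 <= u t).
  { apply (filterlim_le (F := at_right 0) (fun s => - c * exp s) (fun _ => u t) (- c * exp 0) (u t)).
    - exists (mkposreal t Ht). intros s Hs H0s.
      change (Rabs (s - 0) < t) in Hs. apply Rabs_def2 in Hs.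
      pose proof (Hmono s ltac:(lra)). pose proof (Hv s H0s). pose proof (exp_pos s).
      unfold u in *. nra.
    - assert (Hcont : continuous (fun s => - c * exp s) 0).
      { apply (ex_derive_continuous (K := R_AbsRing) (V := R_NormedModule)).
        auto_derive. exact I. }
      apply (filterlim_filter_le_1 (F := locally 0)); [apply filter_le_within | exact Hcont].
    - apply filterlim_const. }
  rewrite exp_0, Rmult_1_r in Hut. unfold u in Hut. pose proof (exp_pos t).
  rewrite exp_Ropp. apply (Rmult_le_reg_r (exp t)); [assumption |].
  replace (c * (1 - / exp t) * exp t) with (c * exp t - c) by (field; lra).
  nra.
Qed.

Lemma le_of_forall_pos_slack (a b k : R) :
  0 < k -> (forall e, 0 < e -> a <= b + e * k) -> a <= b.
Proof.
  intros Hk Hab. apply Rle_plus_epsilon. intros eps Heps.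
  replace eps with (eps / k * k) by (field; lra).
  apply Hab, Rdiv_lt_0_compat; assumption.
Qed.

Lemma one_sub_exp_neg_ge0 (s : R) : 0 <= s -> 0 <= 1 - exp (- s).
Proof.
  intros Hs. destruct (Rle_lt_or_eq_dec 0 s Hs) as [Hpos | <-].
  - pose proof (exp_increasing (- s) 0 ltac:(lra)). rewrite exp_0 in H. lra.
  - rewrite Ropp_0, exp_0. lra.
Qed.

Definition envelope (c t : R) : R := exp (- (c ^ 2) * (t + exp (- t) - 1)).

Definition barrier (c K e t : R) : R := K * envelope c t + e * t.

Lemma envelope_0 (c : R) : envelope c 0 = 1.
Proof.
  unfold envelope. rewrite Ropp_0, exp_0.
  replace (- (c ^ 2) * (0 + 1 - 1)) with 0 by ring. apply exp_0.
Qed.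

Lemma is_derive_barrier (c K e t : R) :
  is_derive (barrier c K e) t (K * (- (c ^ 2 * (1 - exp (- t))) * envelope c t) + e).
Proof.
  unfold barrier, envelope. auto_derive; [exact I |].
  replace (- (c * (c * 1)) * (t + exp (- t) + - (1))) with (- c ^ 2 * (t + exp (- t) - 1))
    by ring.
  ring.
Qed.

Lemma continuous_barrier (c K e t : R) : continuous (barrier c K e) t.
Proof.
  apply (ex_derive_continuous (K := R_AbsRing) (V := R_NormedModule)).
  eexists. apply is_derive_barrier.
Qed.

Lemma sumN_ext (n : nat) (f g : nat -> R) :
  (forall k, (k < n)%nat -> f k = g k) -> sumN n f = sumN n g.
Proof.
  induction n as [| n IH]; intros Hfg; simpl; [reflexivity |].
  rewrite IH, Hfg; [reflexivity | lia | intros; apply Hfg; lia].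
Qed.

Lemma sumN_le (n : nat) (f g : nat -> R) :
  (forall k, (k < n)%nat -> f k <= g k) -> sumN n f <= sumN n g.
Proof.
  induction n as [| n IH]; intros Hfg; simpl; [lra |].
  apply Rplus_le_compat; [apply IH; intros; apply Hfg; lia | apply Hfg; lia].
Qed.

Lemma sumN_opp (n : nat) (f : nat -> R) : sumN n (fun k => - f k) = - sumN n f.
Proof. induction n as [| n IH]; simpl; [ring | rewrite IH; ring]. Qed.

Lemma sumN_scal (n : nat) (a : R) (f : nat -> R) :
  sumN n (fun k => a * f k) = a * sumN n f.
Proof. induction n as [| n IH]; simpl; [ring | rewrite IH; ring]. Qed.

Lemma sumN_minus (n : nat) (f g : nat -> R) :
  sumN n (fun k => f k - g k) = sumN n f - sumN n g.
Proof. induction n as [| n IH]; simpl; [ring | rewrite IH; ring]. Qed.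

Lemma sumN_const (n : nat) (a : R) : sumN n (fun _ => a) = INR n * a.
Proof. induction n as [| n IH]; cbn [sumN]; [simpl; ring | rewrite IH, S_INR; ring]. Qed.

Lemma sumN_ge_term (n : nat) (f : nat -> R) (i : nat) :
  (forall k, (k < n)%nat -> 0 <= f k) -> (i < n)%nat -> f i <= sumN n f.
Proof.
  induction n as [| n IH]; intros Hf Hi; [lia |]. simpl.
  assert (Hsum : 0 <= sumN n f).
  { rewrite <- (Rmult_0_r (INR n)), <- sumN_const. apply sumN_le. intros; apply Hf; lia. }
  pose proof (Hf n (Nat.lt_succ_diag_r n)).
  destruct (Nat.eq_dec i n) as [-> | Hin]; [lra |].
  assert (f i <= sumN n f) by (apply IH; [intros; apply Hf |]; lia).
  lra.
Qed.

Lemma maxN_nonneg (n : nat) (f : nat -> R) : 0 <= Defs.maxN n f.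
Proof.
  induction n as [| n IH]; simpl; [lra |]. eapply Rle_trans; [exact IH | apply Rmax_l].
Qed.

Lemma maxN_ge (n : nat) (f : nat -> R) (k : nat) : (k < n)%nat -> f k <= Defs.maxN n f.
Proof.
  induction n as [| n IH]; intros Hk; simpl; [lia |].
  destruct (Nat.eq_dec k n) as [-> | Hkn]; [apply Rmax_r |].
  eapply Rle_trans; [apply IH; lia | apply Rmax_l].
Qed.

Lemma maxN_lub (n : nat) (f : nat -> R) (b : R) :
  0 <= b -> (forall k, (k < n)%nat -> f k <= b) -> Defs.maxN n f <= b.
Proof.
  induction n as [| n IH]; intros Hb Hf; simpl; [assumption |].
  apply Rmax_lub; [apply IH; [assumption | intros; apply Hf; lia] | apply Hf; lia].
Qed.

Lemma diam_ge_pair (N : nat) (x : nat -> R -> R) (t : R) (i j : nat) :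
  (i < N)%nat -> (j < N)%nat -> Rabs (x j t - x i t) <= diam N x t.
Proof.
  intros Hi Hj. unfold diam.
  eapply Rle_trans; [| apply (maxN_ge _ _ i Hi)]. exact (maxN_ge _ _ j Hj).
Qed.

Lemma diam_nonneg (N : nat) (x : nat -> R -> R) (t : R) : 0 <= diam N x t.
Proof. apply maxN_nonneg. Qed.

Lemma diam_le (N : nat) (x : nat -> R -> R) (t b : R) :
  0 <= b -> (forall i j, (i < N)%nat -> (j < N)%nat -> x j t - x i t <= b) ->
  diam N x t <= b.
Proof.
  intros Hb Hx. unfold diam.
  apply maxN_lub; [assumption |]. intros i Hi.
  apply maxN_lub; [assumption |]. intros j Hj.
  apply Rabs_le. pose proof (Hx i j Hi Hj). pose proof (Hx j i Hj Hi). lra.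
Qed.

Lemma degree_bounds (N : nat) (w : nat -> nat -> R -> R) (i : nat) (t : R) :
  (i < N)%nat -> (forall k, (k < N)%nat -> 0 <= w i k t <= 1) -> w i i t = 1 ->
  1 <= degree N w i t <= INR N.
Proof.
  intros Hi Hw Hii. unfold degree. split.
  - rewrite <- Hii. apply (sumN_ge_term N (fun k => w i k t)); [intros; apply Hw |]; assumption.
  - rewrite <- (Rmult_1_r (INR N)), <- sumN_const. apply sumN_le. intros; apply Hw; assumption.
Qed.

Lemma opinion_rhs_le_of_max (N : nat) (phi : R -> R) (x : nat -> R -> R)
    (w : nat -> nat -> R -> R) (i : nat) (t b : R) :
  (i < N)%nat -> 0 <= b ->
  (forall k, (k < N)%nat -> 0 <= w i k t <= 1) -> w i i t = 1 ->
  (forall k, (k < N)%nat -> x k t <= x i t) ->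
  (forall k, (k < N)%nat -> k <> i -> b <= w i k t * phi (x k t - x i t)) ->
  opinion_rhs N phi x w i t <= b * (sumN N (fun k => x k t) / INR N - x i t).
Proof.
  intros Hi Hb Hw Hii Hmax Hpull.
  destruct (degree_bounds N w i t Hi Hw Hii) as [Hdeg1 HdegN].
  set (B := b * (sumN N (fun k => x k t) - INR N * x i t)).
  assert (HsumB : sumN N (fun j => if Nat.eq_dec j i then 0
                     else w i j t * phi (x j t - x i t) * (x j t - x i t)) <= B).
  { replace B with (sumN N (fun k => b * (x k t - x i t))).
    2: { unfold B. rewrite sumN_scal, sumN_minus, sumN_const. reflexivity. }
    apply sumN_le. intros k Hk.
    destruct (Nat.eq_dec k i) as [-> | Hki]; [lra |].
    pose proof (Hpull k Hk Hki). pose proof (Hmax k Hk). nra. }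
  assert (HB : B <= 0).
  { assert (sumN N (fun k => x k t) <= INR N * x i t).
    { rewrite <- sumN_const. apply sumN_le. exact Hmax. }
    unfold B. nra. }
  unfold opinion_rhs. fold (degree N w i t).
  replace (b * (sumN N (fun k => x k t) / INR N - x i t)) with (/ INR N * B)
    by (unfold B; field; lra).
  apply Rle_trans with (/ degree N w i t * B).
  - apply Rmult_le_compat_l; [apply Rlt_le, Rinv_0_lt_compat; lra | exact HsumB].
  - assert (/ INR N <= / degree N w i t) by (apply Rinv_le_contravar; lra). nra.
Qed.

Lemma opinion_rhs_reflect (N : nat) (phi : R -> R) (x : nat -> R -> R)
    (w : nat -> nat -> R -> R) (i : nat) (t : R) :
  opinion_rhs N (fun r => phi (- r)) (fun k s => - x k s) w i t = - opinion_rhs N phi x w i t.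
Proof.
  unfold opinion_rhs. rewrite Ropp_mult_distr_r, <- sumN_opp. f_equal.
  apply sumN_ext. intros k _. destruct (Nat.eq_dec k i); [ring |].
  replace (- (- x k t - - x i t)) with (x k t - x i t) by ring. ring.
Qed.

Lemma opinion_rhs_ge_of_min (N : nat) (phi : R -> R) (x : nat -> R -> R)
    (w : nat -> nat -> R -> R) (i : nat) (t b : R) :
  (i < N)%nat -> 0 <= b ->
  (forall k, (k < N)%nat -> 0 <= w i k t <= 1) -> w i i t = 1 ->
  (forall k, (k < N)%nat -> x i t <= x k t) ->
  (forall k, (k < N)%nat -> k <> i -> b <= w i k t * phi (x k t - x i t)) ->
  b * (sumN N (fun k => x k t) / INR N - x i t) <= opinion_rhs N phi x w i t.
Proof.
  intros Hi Hb Hw Hii Hmin Hpull.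
  assert (H := opinion_rhs_le_of_max N (fun r => phi (- r)) (fun k s => - x k s) w i t b
                 Hi Hb Hw Hii).
  rewrite opinion_rhs_reflect, sumN_opp in H.
  enough (- opinion_rhs N phi x w i t <=
          b * (- sumN N (fun k => x k t) / INR N - - x i t)) by (unfold Rdiv in *; lra).
  apply H.
  - intros k Hk. pose proof (Hmin k Hk). lra.
  - intros k Hk Hki. replace (- (- x k t - - x i t)) with (x k t - x i t) by ring.
    exact (Hpull k Hk Hki).
Qed.

Section Consensus.

Variables (N : nat) (phi : R -> R) (c : R) (x : nat -> R -> R) (w : nat -> nat -> R -> R).

Hypothesis Hc : 0 <= c.
Hypothesis Hphic : forall r, -2 <= r <= 2 -> c <= phi r.
Hypothesis Hx_range : forall i t, (i < N)%nat -> 0 <= t -> -1 <= x i t <= 1.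
Hypothesis Hw_range : forall i j t, (i < N)%nat -> (j < N)%nat -> 0 <= t ->
  0 <= w i j t <= 1.
Hypothesis Hw_diag : forall i t, (i < N)%nat -> 0 <= t -> w i i t = 1.
Hypothesis Hx_ode : forall i t, (i < N)%nat -> 0 < t ->
  is_derive (x i) t (opinion_rhs N phi x w i t).
Hypothesis Hw_ode : forall i j t, (i < N)%nat -> (j < N)%nat -> i <> j -> 0 < t ->
  is_derive (w i j) t (phi (x j t - x i t) - w i j t).
Hypothesis Hx_cont0 : forall i, (i < N)%nat ->
  filterlim (x i) (at_right 0) (locally (x i 0)).

Lemma interaction_ge (k l : nat) (s : R) :
  (k < N)%nat -> (l < N)%nat -> 0 <= s -> c <= phi (x l s - x k s).
Proof.
  intros Hk Hl Hs. apply Hphic.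
  pose proof (Hx_range k s Hk Hs). pose proof (Hx_range l s Hl Hs). lra.
Qed.

Lemma weight_ge (k l : nat) (s : R) :
  (k < N)%nat -> (l < N)%nat -> k <> l -> 0 < s -> c * (1 - exp (- s)) <= w k l s.
Proof.
  intros Hk Hl Hkl.
  apply (relaxation_lower_bound (w k l) (fun s => phi (x l s - x k s))).
  - intros r Hr. apply Hw_range; [assumption | assumption | lra].
  - intros r Hr. apply Hw_ode; assumption.
  - intros r Hr. apply interaction_ge; [assumption | assumption | lra].
Qed.

Lemma pull_ge (k l : nat) (s : R) :
  (k < N)%nat -> (l < N)%nat -> k <> l -> 0 < s ->
  c ^ 2 * (1 - exp (- s)) <= w k l s * phi (x l s - x k s).
Proof.
  intros Hk Hl Hkl Hs.
  pose proof (one_sub_exp_neg_ge0 s (Rlt_le _ _ Hs)).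
  replace (c ^ 2 * (1 - exp (- s))) with (c * (1 - exp (- s)) * c) by ring.
  apply Rmult_le_compat.
  - apply Rmult_le_pos; assumption.
  - assumption.
  - apply weight_ge; assumption.
  - apply interaction_ge; [assumption | assumption | lra].
Qed.

Lemma opinion_continuous (k : nat) (s : R) : (k < N)%nat -> 0 < s -> continuous (x k) s.
Proof.
  intros Hk Hs. apply (ex_derive_continuous (K := R_AbsRing) (V := R_NormedModule)).
  eexists. apply Hx_ode; assumption.
Qed.

Lemma opinion_lim_right (k : nat) (s : R) :
  (k < N)%nat -> 0 <= s -> filterlim (x k) (at_right s) (locally (x k s)).
Proof.
  intros Hk Hs. destruct (Req_dec s 0) as [-> | Hs0]; [apply Hx_cont0; assumption |].
  apply (filterlim_filter_le_1 (F := locally s)); [apply filter_le_within |].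
  apply opinion_continuous; [assumption | lra].
Qed.

Lemma spread_derive_le (i j : nat) (t : R) :
  (i < N)%nat -> (j < N)%nat -> 0 < t ->
  (forall k, (k < N)%nat -> x i t <= x k t <= x j t) ->
  opinion_rhs N phi x w j t - opinion_rhs N phi x w i t <=
  - (c ^ 2 * (1 - exp (- t))) * (x j t - x i t).
Proof.
  intros Hi Hj Ht Hext.
  set (b := c ^ 2 * (1 - exp (- t))).
  assert (Hb : 0 <= b).
  { apply Rmult_le_pos; [apply pow2_ge_0 | apply one_sub_exp_neg_ge0; lra]. }
  assert (Hw : forall k, (k < N)%nat -> forall l, (l < N)%nat -> 0 <= w k l t <= 1).
  { intros k Hk l Hl. apply Hw_range; [assumption | assumption | lra]. }
  assert (Hj_le := opinion_rhs_le_of_max N phi x w j t b Hj Hb (Hw j Hj)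
    (Hw_diag j t Hj (Rlt_le _ _ Ht)) (fun k Hk => proj2 (Hext k Hk))
    (fun k Hk Hkj => pull_ge j k t Hj Hk (not_eq_sym Hkj) Ht)).
  assert (Hi_ge := opinion_rhs_ge_of_min N phi x w i t b Hi Hb (Hw i Hi)
    (Hw_diag i t Hi (Rlt_le _ _ Ht)) (fun k Hk => proj1 (Hext k Hk))
    (fun k Hk Hki => pull_ge i k t Hi Hk (not_eq_sym Hki) Ht)).
  unfold b in *. lra.
Qed.

Definition below_barrier (K e t : R) : Prop :=
  forall i j, (i < N)%nat -> (j < N)%nat -> x j t - x i t < barrier c K e t.

Lemma below_barrier_right (K e t : R) :
  0 <= t -> below_barrier K e t -> at_right t (below_barrier K e).
Proof.
  intros Ht Hbelow.
  apply (filter_imp (fun s => forall i, (i < N)%nat ->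
                       forall j, (j < N)%nat -> x j s - x i s < barrier c K e s));
    [intros s Hs i j Hi Hj; apply Hs; assumption |].
  apply (filter_forall_nat_lt (at_right t)
           (fun i s => forall j, (j < N)%nat -> x j s - x i s < barrier c K e s)).
  intros i Hi.
  apply (filter_forall_nat_lt (at_right t) (fun j s => x j s - x i s < barrier c K e s)).
  intros j Hj.
  apply (filter_imp (fun s => x j s - x i s - barrier c K e s < 0)); [intros s Hs; lra |].
  apply (filterlim_lt_eventually _ (fun s => x j s - x i s - barrier c K e s)
           (x j t - x i t - barrier c K e t) 0).
  - apply (filterlim_Rminus (at_right t)); [apply (filterlim_Rminus (at_right t)) |].
    + apply opinion_lim_right; assumption.
    + apply opinion_lim_right; assumption.
    + apply (filterlim_filter_le_1 (F := locally t));
        [apply filter_le_within | apply continuous_barrier].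
  - pose proof (Hbelow i j Hi Hj). lra.
Qed.

Lemma is_derive_gap (K e t : R) (i j : nat) :
  (i < N)%nat -> (j < N)%nat -> 0 < t ->
  is_derive (fun s => x j s - x i s - barrier c K e s) t
    (opinion_rhs N phi x w j t - opinion_rhs N phi x w i t -
     (K * (- (c ^ 2 * (1 - exp (- t))) * envelope c t) + e)).
Proof.
  intros Hi Hj Ht.
  apply (is_derive_minus (fun s => x j s - x i s)); [| apply is_derive_barrier].
  apply (is_derive_minus (x j) (x i)); apply Hx_ode; assumption.
Qed.

Lemma below_barrier_left (K e t : R) :
  0 < e -> 0 < t -> (forall s, 0 <= s < t -> below_barrier K e s) -> below_barrier K e t.
Proof.
  intros He Ht Hbefore.
  set (gap := fun i j s => x j s - x i s - barrier c K e s).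
  assert (Hgap_derive := fun i j Hi Hj => is_derive_gap K e t i j Hi Hj Ht).
  assert (Hgap_left : forall i j, (i < N)%nat -> (j < N)%nat -> at_left t (fun s => gap i j s < 0)).
  { intros i j Hi Hj. apply at_left_of_forall_before; [assumption |].
    intros s Hs. pose proof (Hbefore s Hs i j Hi Hj). unfold gap. lra. }
  assert (Hgap_le : forall i j, (i < N)%nat -> (j < N)%nat -> gap i j t <= 0).
  { intros i j Hi Hj. apply continuous_le_at_left.
    - apply (ex_derive_continuous (K := R_AbsRing) (V := R_NormedModule)).
      eexists. apply Hgap_derive; assumption.
    - apply (filter_imp (fun s => gap i j s < 0));
        [intros s Hs; lra | apply Hgap_left; assumption]. }
  intros i j Hi Hj.
  destruct (Rle_lt_or_eq_dec _ _ (Hgap_le i j Hi Hj)) as [Hlt | Htouch];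
    [unfold gap in Hlt; lra | exfalso].
  assert (Hext : forall k, (k < N)%nat -> x i t <= x k t <= x j t).
  { intros k Hk. pose proof (Hgap_le i k Hi Hk). pose proof (Hgap_le k j Hk Hj).
    unfold gap in *. lra. }
  assert (Hslope : at_left t (fun s => gap i j s <= gap i j t)).
  { rewrite Htouch. apply (filter_imp (fun s => gap i j s < 0));
      [intros s Hs; lra | apply Hgap_left; assumption]. }
  apply (is_derive_ge0_at_left_max _ _ _ (Hgap_derive i j Hi Hj)) in Hslope.
  pose proof (spread_derive_le i j t Hi Hj Ht Hext) as Hspread.
  set (a := c ^ 2 * (1 - exp (- t))) in *.
  unfold gap, barrier in Htouch.
  assert (Hxji : x j t - x i t = K * envelope c t + e * t) by lra.
  rewrite Hxji in Hspread.
  assert (Ha : 0 <= a * (e * t)).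
  { apply Rmult_le_pos; [| nra].
    apply Rmult_le_pos; [apply pow2_ge_0 | apply one_sub_exp_neg_ge0; lra]. }
  assert (- a * (K * envelope c t + e * t) - (K * (- a * envelope c t) + e) =
          - (a * (e * t)) - e) by ring.
  lra.
Qed.

Lemma below_barrier_init (e : R) : 0 < e -> below_barrier (diam N x 0 + e) e 0.
Proof.
  intros He i j Hi Hj. unfold barrier. rewrite envelope_0.
  pose proof (Rle_abs (x j 0 - x i 0)). pose proof (diam_ge_pair N x 0 i j Hi Hj). lra.
Qed.

Lemma below_barrier_always (K e : R) :
  0 < e -> below_barrier K e 0 -> forall t, 0 <= t -> below_barrier K e t.
Proof.
  intros He H0. apply continuous_induction; [assumption | apply below_barrier_right |].
  intros t Ht. apply below_barrier_left; assumption.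
Qed.

Theorem diam_le_envelope (t : R) :
  0 <= t -> diam N x t <= envelope c t * diam N x 0.
Proof.
  intros Ht. assert (HE : 0 < envelope c t) by apply exp_pos.
  apply (le_of_forall_pos_slack _ _ (envelope c t + t)); [lra |].
  intros e He. apply diam_le.
  - pose proof (diam_nonneg N x 0). nra.
  - intros i j Hi Hj.
    pose proof (below_barrier_always (diam N x 0 + e) e He (below_barrier_init e He)
                  t Ht i j Hi Hj) as Hij.
    unfold barrier in Hij. lra.
Qed.

End Consensus.

Theorem proposition2
  (N : nat) (phi : R -> R) (c : R)
  (x : nat -> R -> R) (w : nat -> nat -> R -> R)
  (HN : (1 <= N)%nat)
  (* interaction function phi : [-2,2] -> [0,1], Lipschitz, even, phi(0) > 0 *)
  (Hphi_range : forall r, -2 <= r <= 2 -> 0 <= phi r <= 1)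
  (Hphi_lip : exists L, forall r s, -2 <= r <= 2 -> -2 <= s <= 2 ->
                Rabs (phi r - phi s) <= L * Rabs (r - s))
  (Hphi_even : forall r, -2 <= r <= 2 -> phi (- r) = phi r)
  (Hphi0 : 0 < phi 0)
  (* the additional assumption *)
  (Hc : 0 < c)
  (Hphic : forall r, -2 <= r <= 2 -> c < phi r)
  (* state space *)
  (Hx_range : forall i t, (i < N)%nat -> 0 <= t -> -1 <= x i t <= 1)
  (Hw_range : forall i j t, (i < N)%nat -> (j < N)%nat -> 0 <= t ->
                0 <= w i j t <= 1)
  (* w_ii = 1 *)
  (Hw_diag : forall i t, (i < N)%nat -> 0 <= t -> w i i t = 1)
  (* initial conditions *)
  (Hx_sorted : forall i j, (i <= j)%nat -> (j < N)%nat -> x i 0 <= x j 0)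
  (Hsc : strongly_connected N (fun i j => w i j 0))
  (* dynamics for t > 0, with right-continuity at t = 0 *)
  (Hx_ode : forall i t, (i < N)%nat -> 0 < t ->
              is_derive (x i) t (opinion_rhs N phi x w i t))
  (Hw_ode : forall i j t, (i < N)%nat -> (j < N)%nat -> i <> j -> 0 < t ->
              is_derive (w i j) t (phi (x j t - x i t) - w i j t))
  (Hx_cont0 : forall i, (i < N)%nat ->
              filterlim (x i) (at_right 0) (locally (x i 0)))
  (Hw_cont0 : forall i j, (i < N)%nat -> (j < N)%nat ->
              filterlim (w i j) (at_right 0) (locally (w i j 0))) :
  forall t, 0 <= t ->
    diam N x t <= exp (- (c ^ 2) * (t + exp (- t) - 1)) * diam N x 0.
Proof.
  intros t Ht.
  apply (diam_le_envelope N phi c x w (Rlt_le _ _ Hc) (fun r Hr => Rlt_le _ _ (Hphic r Hr))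
           Hx_range Hw_range Hw_diag Hx_ode Hw_ode Hx_cont0 t Ht).
Qed.
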